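(* Convolution $(\sigma,\tau)\mapsto\sigma*\tau$ is a separately continuous map from $\mathcal T\times\mathcal T$ to $\mathcal T$.
   Context: Standing setting: $(X,\|\cdot\|)$ is a separable infinite-dimensional Banach space and $d$ is a translation-invariant stable pseudometric on $X$ such that $\mathrm{Id}\colon(X,\|\cdot\|)\to(X,d)$ is a coarse equivalence ($\omega_{\mathrm{Id}}(t)=\sup\{d(x,y):\|x-y\|\le t\}<\infty$ for all $t$, $\rho_{\mathrm{Id}}(t)=\inf\{d(x,y):\|x-y\|\ge t\}\to\infty$). $\Delta$ is a countable $\|\cdot\|$-dense $\mathbb Q$-linear subspace of $X$; for $x\in\Delta$, $\bar x(\lambda,y)=d(\lambda x,y)$. $\mathcal T$ is the closure of $\{\bar x:x\in\Delta\}$ in $\mathbb R^{\mathbb Q\times\Delta}$ (pointwise topology); a defining sequence for $\sigma\in\mathcal T$ is $(x_n)\subseteq\Delta$ with $\bar x_n\to\sigma$. For $\sigma,\tau\in\mathcal T$ with defining sequences $(x_n),(y_m)$, the convolution is $\sigma*\tau=\lim_n\lim_m\overline{x_n+y_m}$ (this exists and is independent of the defining sequences). *)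

From Stdlib Require Import Reals Lra List QArith Qcanon Qreals.
Open Scope R_scope.

Record Banach := mkBanach {
  carrier :> Type;
  vzero : carrier;
  vadd : carrier -> carrier -> carrier;
  vopp : carrier -> carrier;
  vscal : R -> carrier -> carrier;
  vnorm : carrier -> R;
  vadd_assoc : forall x y z, vadd x (vadd y z) = vadd (vadd x y) z;
  vadd_comm : forall x y, vadd x y = vadd y x;
  vadd_0 : forall x, vadd vzero x = x;
  vadd_opp : forall x, vadd x (vopp x) = vzero;
  vscal_1 : forall x, vscal 1 x = x;
  vscal_assoc : forall a b x, vscal a (vscal b x) = vscal (a * b) x;
  vscal_distr_v : forall a x y, vscal a (vadd x y) = vadd (vscal a x) (vscal a y);
  vscal_distr_s : forall a b x, vscal (a + b) x = vadd (vscal a x) (vscal b x);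
  vnorm_eq0 : forall x, vnorm x = 0 -> x = vzero;
  vnorm_scal : forall a x, vnorm (vscal a x) = Rabs a * vnorm x;
  vnorm_triangle : forall x y, vnorm (vadd x y) <= vnorm x + vnorm y;
  vcomplete : forall u : nat -> carrier,
    (forall eps, 0 < eps -> exists N, forall n m, (n >= N)%nat -> (m >= N)%nat ->
        vnorm (vadd (u n) (vopp (u m))) < eps) ->
    exists l, forall eps, 0 < eps -> exists N, forall n, (n >= N)%nat ->
        vnorm (vadd (u n) (vopp l)) < eps
}.

Arguments vzero {b0}.
Arguments vadd {b0}.
Arguments vopp {b0}.
Arguments vscal {b0}.
Arguments vnorm {b0}.

Definition vsub {B : Banach} (x y : B) : B := vadd x (vopp y).

Fixpoint lincomb {B : Banach} (c : nat -> R) (v : nat -> B) (n : nat) : B :=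
  match n with
  | O => vzero
  | S k => vadd (lincomb c v k) (vscal (c k) (v k))
  end.

Definition separable (B : Banach) : Prop :=
  exists s : nat -> B, forall x eps, 0 < eps -> exists n, vnorm (vsub x (s n)) < eps.

Definition infinite_dimensional (B : Banach) : Prop :=
  forall n, exists v : nat -> B, forall c : nat -> R,
    lincomb c v n = vzero -> forall i, (i < n)%nat -> c i = 0.

Definition pseudometric {B : Banach} (d : B -> B -> R) : Prop :=
  (forall x, d x x = 0) /\ (forall x y, d x y = d y x) /\
  (forall x y z, d x z <= d x y + d y z).

Definition translation_invariant {B : Banach} (d : B -> B -> R) : Prop :=
  forall x y z, d (vadd x z) (vadd y z) = d x y.

Definition d_bounded_seq {B : Banach} (d : B -> B -> R) (x : nat -> B) : Prop :=
  exists z M, forall n, d (x n) z <= M.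

(* Stability (Krivine-Maurey / Kalton): for d-bounded sequences, the two
   iterated limits of d(x_n, y_m) coincide whenever they both exist. *)
Definition stable {B : Banach} (d : B -> B -> R) : Prop :=
  forall (x y : nat -> B), d_bounded_seq d x -> d_bounded_seq d y ->
  forall (a b : nat -> R) (l1 l2 : R),
    (forall n, Un_cv (fun m => d (x n) (y m)) (a n)) -> Un_cv a l1 ->
    (forall m, Un_cv (fun n => d (x n) (y m)) (b m)) -> Un_cv b l2 ->
    l1 = l2.

Definition id_coarse_equivalence {B : Banach} (d : B -> B -> R) : Prop :=
  (forall t, exists M, forall x y : B, vnorm (vsub x y) <= t -> d x y <= M) /\
  (forall K, exists t, forall x y : B, t <= vnorm (vsub x y) -> K <= d x y).

Definition good_Delta {B : Banach} (Delta : B -> Prop) : Prop :=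
  (exists e : nat -> B, forall x, Delta x -> exists n, e n = x) /\
  (forall x eps, 0 < eps -> exists y, Delta y /\ vnorm (vsub x y) < eps) /\
  Delta vzero /\
  (forall x y, Delta x -> Delta y -> Delta (vadd x y)) /\
  (forall (q : Q) x, Delta x -> Delta (vscal (Q2R q) x)).

(* Coordinates Q x Delta (Q with canonical representatives) *)
Definition coord {B : Banach} (Delta : B -> Prop) : Type :=
  (Qc * {y : B | Delta y})%type.

Definition bar {B : Banach} (d : B -> B -> R) (Delta : B -> Prop) (x : B) :
  coord Delta -> R :=
  fun p => d (vscal (Q2R (this (fst p))) x) (proj1_sig (snd p)).

(* membership in T = closure of {xbar : x in Delta} in R^(Q x Delta),
   product (pointwise) topology *)
Definition inT {B : Banach} (d : B -> B -> R) (Delta : B -> Prop)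
  (s : coord Delta -> R) : Prop :=
  forall (F : list (coord Delta)) (eps : R), 0 < eps ->
    exists x, Delta x /\ forall p, In p F -> Rabs (bar d Delta x p - s p) < eps.

Definition def_seq {B : Banach} (d : B -> B -> R) (Delta : B -> Prop)
  (xs : nat -> B) (s : coord Delta -> R) : Prop :=
  (forall n, Delta (xs n)) /\
  (forall p, Un_cv (fun n => bar d Delta (xs n) p) (s p)).

Definition is_convolution {B : Banach} (d : B -> B -> R) (Delta : B -> Prop)
  (c : (coord Delta -> R) -> (coord Delta -> R) -> (coord Delta -> R)) : Prop :=
  forall s t, inT d Delta s -> inT d Delta t ->
  forall xs ys, def_seq d Delta xs s -> def_seq d Delta ys t ->
  forall p, exists L : nat -> R,
    (forall n, Un_cv (fun m => bar d Delta (vadd (xs n) (ys m)) p) (L n)) /\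
    Un_cv L (c s t p).

(* continuity of g : T -> R^(Q x Delta), for the (subspace of the) product
   topology on both sides *)
Definition continuous_on_T {B : Banach} (d : B -> B -> R) (Delta : B -> Prop)
  (g : (coord Delta -> R) -> (coord Delta -> R)) : Prop :=
  forall s0, inT d Delta s0 ->
  forall (q : coord Delta) (eps : R), 0 < eps ->
  exists (G : list (coord Delta)) (delta : R), 0 < delta /\
    forall s, inT d Delta s ->
      (forall p, In p G -> Rabs (s p - s0 p) < delta) ->
      Rabs (g s q - g s0 q) < eps.

(* Everything is reduced to sequences, which is possible because the index set
   Q x Delta of the coordinates is countable.  Continuity in the left variable is
   a diagonal argument: if s_k -> s pointwise and (x^k_n)_n defines s_k, then a
   suitable diagonal (x^k_(n_k))_k defines s, and the inner limits
   lim_m d(lambda(x^k_(n_k) + y_m), z) can be made as close to (s_k * t)(lambda, z)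
   as we like.  Continuity in the right variable follows from commutativity of
   the convolution, which is exactly where stability of d enters: the two iterated
   limits defining s * t and t * s are the two iterated limits of
   d(lambda x_n, z - lambda y_m). *)

From Stdlib Require Import Reals Lra Lia ZArith List QArith Qcanon Qreals Cantor.
From Stdlib Require Import Classical ClassicalEpsilon ProofIrrelevance.
Open Scope R_scope.

Definition countable (T : Type) := exists f : nat -> T, forall x, exists n, f n = x.

Lemma countable_prod (A B : Type) : countable A -> countable B -> countable (A * B).
Proof.
  intros [f Hf] [g Hg].
  exists (fun n => (f (fst (Cantor.of_nat n)), g (snd (Cantor.of_nat n)))).
  intros [a b]. destruct (Hf a) as [i <-], (Hg b) as [j <-].
  exists (Cantor.to_nat (i, j)). now rewrite Cantor.cancel_of_to.
Qed.

Lemma countable_nat : countable nat.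
Proof. exists (fun n => n). intros n. now exists n. Qed.

Lemma countable_Z : countable Z.
Proof.
  destruct (countable_prod _ _ countable_nat countable_nat) as [f Hf].
  exists (fun n => (Z.of_nat (fst (f n)) - Z.of_nat (snd (f n)))%Z).
  intros z. destruct (Hf (Z.to_nat z, Z.to_nat (- z))) as [n Hn].
  exists n. rewrite Hn. simpl. lia.
Qed.

Lemma countable_positive : countable positive.
Proof. exists Pos.of_nat. intros p. exists (Pos.to_nat p). apply Pnat.Pos2Nat.id. Qed.

Lemma countable_Qc : countable Qc.
Proof.
  destruct (countable_prod _ _ countable_Z countable_positive) as [f Hf].
  exists (fun n => Q2Qc (Qmake (fst (f n)) (snd (f n)))).
  intros [[a b] Hq]. destruct (Hf (a, b)) as [n Hn]. exists n. rewrite Hn.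
  now apply Qc_decomp.
Qed.

Lemma countable_sig (T : Type) (P : T -> Prop) (x0 : T) :
  P x0 -> (exists e : nat -> T, forall x, P x -> exists n, e n = x) ->
  countable {x : T | P x}.
Proof.
  intros Hx0 [e He].
  exists (fun n => match excluded_middle_informative (P (e n)) with
                   | left h => exist _ (e n) h
                   | right _ => exist _ x0 Hx0
                   end).
  intros [x Hx]. destruct (He x Hx) as [n Hn]. exists n.
  destruct (excluded_middle_informative (P (e n))) as [h|h]; subst x.
  - f_equal. apply proof_irrelevance.
  - contradiction.
Qed.

Lemma Un_cv_const (l : R) : Un_cv (fun _ => l) l.
Proof. intros eps He. exists O. intros n _. rewrite Rdist_eq. lra. Qed.

Lemma Un_cv_bounded_above (a : nat -> R) (l : R) :
  Un_cv a l -> exists M, forall n, a n <= M.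
Proof.
  intros Ha. destruct (cauchy_bound a (CV_Cauchy a (exist _ l Ha))) as [M HM].
  exists M. intros n. apply HM. now exists n.
Qed.

Lemma Un_cv_near (a b : nat -> R) (l : R) (j : nat) :
  (forall k, (j < k)%nat -> Rdist (a k) (b k) < RinvN k) -> Un_cv b l -> Un_cv a l.
Proof.
  intros Hab Hb eps He.
  destruct (RinvN_cv (ltac:(lra) : eps / 2 > 0)) as [N1 HN1].
  destruct (Hb (eps / 2) ltac:(lra)) as [N2 HN2].
  exists (max N1 (max N2 (S j))). intros n Hn.
  specialize (HN1 n ltac:(lia)). specialize (HN2 n ltac:(lia)). specialize (Hab n ltac:(lia)).
  unfold Rdist in HN1. rewrite Rminus_0_r, Rabs_pos_eq in HN1 by apply Rlt_le, cond_pos.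
  pose proof (Rdist_tri (a n) l (b n)). lra.
Qed.

Lemma eventually_forall_In (T : Type) (P : T -> nat -> Prop) (F : list T) :
  (forall p, In p F -> exists N, forall n, (n >= N)%nat -> P p n) ->
  exists N, forall n, (n >= N)%nat -> forall p, In p F -> P p n.
Proof.
  induction F as [|a F IH]; intros H.
  - exists O. intros n _ p [].
  - destruct (H a (or_introl eq_refl)) as [N1 H1].
    destruct IH as [N2 H2]. { intros p Hp. apply H. now right. }
    exists (max N1 N2). intros n Hn p [<-|Hp].
    + apply H1. lia.
    + apply H2; [lia|assumption].
Qed.

Lemma vadd_0_r (B : Banach) (x : B) : vadd x vzero = x.
Proof. rewrite vadd_comm. apply vadd_0. Qed.

Section TranslationInvariant.

Variables (B : Banach) (d : B -> B -> R).
Hypothesis d_ti : translation_invariant d.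

Lemma dist_vadd_l (a b z : B) : d (vadd a b) z = d a (vsub z b).
Proof.
  rewrite <- (d_ti a (vsub z b) b). f_equal. unfold vsub.
  rewrite <- vadd_assoc, (vadd_comm _ (vopp b) b), vadd_opp. symmetry. apply vadd_0_r.
Qed.

Lemma dist_vsub_l (d_sym : forall x y, d x y = d y x) (v z : B) :
  d (vsub z v) z = d v vzero.
Proof.
  rewrite d_sym, <- (vadd_0 B z) at 1. unfold vsub.
  rewrite (vadd_comm _ z), d_ti, <- (d_ti vzero (vopp v) v).
  now rewrite vadd_0, (vadd_comm _ (vopp v) v), vadd_opp.
Qed.

End TranslationInvariant.

Section Convolution.

Variables (B : Banach) (d : B -> B -> R) (Delta : B -> Prop).
Variable E : nat -> coord Delta.
Hypothesis E_surj : forall p, exists n, E n = p.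

Definition prefix (k : nat) : list (coord Delta) := map E (seq 0 k).

Lemma In_prefix (j k : nat) : (j < k)%nat -> In (E j) (prefix k).
Proof. intros. apply in_map, in_seq. lia. Qed.

Lemma pointwise_cv_of_prefix_near (u v : nat -> coord Delta -> R) (s : coord Delta -> R) :
  (forall k p, In p (prefix k) -> Rdist (u k p) (v k p) < RinvN k) ->
  (forall p, Un_cv (fun k => v k p) (s p)) ->
  forall p, Un_cv (fun k => u k p) (s p).
Proof.
  intros Huv Hv p. destruct (E_surj p) as [j <-].
  apply Un_cv_near with (fun k => v k (E j)) j; [|apply Hv].
  intros k Hk. apply Huv, In_prefix, Hk.
Qed.

Lemma def_seq_exists (s : coord Delta -> R) :
  inT d Delta s -> exists xs, def_seq d Delta xs s.
Proof.
  intros Hs.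
  destruct (choice (fun k x => Delta x /\
              forall p, In p (prefix k) -> Rabs (bar d Delta x p - s p) < RinvN k))
    as [xs Hxs].
  { intros k. apply Hs, cond_pos. }
  exists xs. split.
  - intros k. apply Hxs.
  - apply pointwise_cv_of_prefix_near with (fun _ => s).
    + intros k. apply Hxs.
    + intros p. apply Un_cv_const.
Qed.

(* The lower bounds [N k] on the chosen indices let the caller control, in
   addition, any property that holds eventually along each row. *)
Lemma def_seq_diagonal (xs : nat -> nat -> B) (ss : nat -> coord Delta -> R)
  (s : coord Delta -> R) (N : nat -> nat) :
  (forall k, def_seq d Delta (xs k) (ss k)) ->
  (forall p, Un_cv (fun k => ss k p) (s p)) ->
  exists n : nat -> nat, (forall k, (N k <= n k)%nat) /\
    def_seq d Delta (fun k => xs k (n k)) s.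
Proof.
  intros Hxs Hss.
  destruct (choice (fun k n => (N k <= n)%nat /\ forall p, In p (prefix k) ->
              Rdist (bar d Delta (xs k n) p) (ss k p) < RinvN k)) as [n Hn].
  { intros k.
    destruct (eventually_forall_In _ (fun p n => Rdist (bar d Delta (xs k n) p) (ss k p) < RinvN k)
                (prefix k)) as [M HM].
    { intros p _. apply (proj2 (Hxs k)), cond_pos. }
    exists (max (N k) M). split; [lia|]. apply HM. lia. }
  exists n. split; [apply Hn|]. split.
  - intros k. apply (proj1 (Hxs k)).
  - apply pointwise_cv_of_prefix_near with ss; [apply Hn|exact Hss].
Qed.

Lemma continuous_on_T_of_seq (g : (coord Delta -> R) -> coord Delta -> R) :
  (forall (ss : nat -> coord Delta -> R) s, (forall k, inT d Delta (ss k)) -> inT d Delta s ->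
     (forall p, Un_cv (fun k => ss k p) (s p)) ->
     forall q, Un_cv (fun k => g (ss k) q) (g s q)) ->
  continuous_on_T d Delta g.
Proof.
  intros Hseq s Hs q eps He. apply NNPP. intros Hcont.
  destruct (choice (fun k s' => (inT d Delta s' /\
              forall p, In p (prefix k) -> Rabs (s' p - s p) < RinvN k) /\
              eps <= Rabs (g s' q - g s q))) as [ss Hss].
  { intros k. apply NNPP. intros Hk. apply Hcont.
    exists (prefix k), (RinvN k). split; [apply cond_pos|].
    intros s' Hs' Hnear. apply Rnot_le_lt. intros Hfar. apply Hk. eauto. }
  assert (Hcv : forall p, Un_cv (fun k => ss k p) (s p)).
  { apply pointwise_cv_of_prefix_near with (fun _ => s).
    - intros k. apply Hss.
    - intros p. apply Un_cv_const. }
  destruct (Hseq ss s (fun k => proj1 (proj1 (Hss k))) Hs Hcv q eps He) as [K HK].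
  specialize (HK K (le_n K)). pose proof (proj2 (Hss K)). unfold Rdist in HK. lra.
Qed.

Lemma continuous_on_T_ext (g h : (coord Delta -> R) -> coord Delta -> R) :
  (forall s, inT d Delta s -> forall q, g s q = h s q) ->
  continuous_on_T d Delta g -> continuous_on_T d Delta h.
Proof.
  intros Hgh Hg s Hs q eps He.
  destruct (Hg s Hs q eps He) as [G [delta [Hdelta HG]]].
  exists G, delta. split; [exact Hdelta|].
  intros s' Hs' Hnear. rewrite <- !Hgh by assumption. auto.
Qed.

Variable c : (coord Delta -> R) -> (coord Delta -> R) -> (coord Delta -> R).
Hypothesis c_conv : is_convolution d Delta c.

Lemma conv_inner_limits (s t : coord Delta -> R) (xs ys : nat -> B) :
  inT d Delta s -> inT d Delta t -> def_seq d Delta xs s -> def_seq d Delta ys t ->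
  exists L : coord Delta -> nat -> R, forall p,
    (forall n, Un_cv (fun m => bar d Delta (vadd (xs n) (ys m)) p) (L p n)) /\
    Un_cv (L p) (c s t p).
Proof.
  intros Hs Ht Hxs Hys.
  apply (choice (fun p L =>
           (forall n, Un_cv (fun m => bar d Delta (vadd (xs n) (ys m)) p) (L n)) /\
           Un_cv L (c s t p))).
  intros p. now apply c_conv.
Qed.

Lemma conv_inT (s t : coord Delta -> R) :
  (forall x y, Delta x -> Delta y -> Delta (vadd x y)) ->
  inT d Delta s -> inT d Delta t -> inT d Delta (c s t).
Proof.
  intros Delta_add Hs Ht F eps He.
  destruct (def_seq_exists s Hs) as [xs Hxs], (def_seq_exists t Ht) as [ys Hys].
  destruct (conv_inner_limits s t xs ys Hs Ht Hxs Hys) as [L HL].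
  destruct (eventually_forall_In _ (fun p n => Rdist (L p n) (c s t p) < eps / 2) F) as [n Hn].
  { intros p _. apply (proj2 (HL p)). lra. }
  destruct (eventually_forall_In _
              (fun p m => Rdist (bar d Delta (vadd (xs n) (ys m)) p) (L p n) < eps / 2) F)
    as [m Hm].
  { intros p _. apply (proj1 (HL p)). lra. }
  exists (vadd (xs n) (ys m)). split.
  - apply Delta_add; [apply (proj1 Hxs)|apply (proj1 Hys)].
  - intros p Hp. specialize (Hn n (le_n n) p Hp). specialize (Hm m (le_n m) p Hp).
    pose proof (Rdist_tri (bar d Delta (vadd (xs n) (ys m)) p) (c s t p) (L p n)).
    unfold Rdist in *. lra.
Qed.

Lemma conv_seq_continuous_l (ss : nat -> coord Delta -> R) (s t : coord Delta -> R) :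
  (forall k, inT d Delta (ss k)) -> inT d Delta s -> inT d Delta t ->
  (forall p, Un_cv (fun k => ss k p) (s p)) ->
  forall q, Un_cv (fun k => c (ss k) t q) (c s t q).
Proof.
  intros Hss Hs Ht Hcv q.
  destruct (choice (fun k xs => def_seq d Delta xs (ss k))) as [xs Hxs].
  { intros k. apply def_seq_exists, Hss. }
  destruct (def_seq_exists t Ht) as [ys Hys].
  destruct (choice (fun k L =>
              (forall n, Un_cv (fun m => bar d Delta (vadd (xs k n) (ys m)) q) (L n)) /\
              Un_cv L (c (ss k) t q))) as [L HL].
  { intros k. now apply c_conv. }
  destruct (choice (fun k N => forall n, (n >= N)%nat ->
              Rdist (L k n) (c (ss k) t q) < RinvN k)) as [N HN].
  { intros k. apply (proj2 (HL k)), cond_pos. }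
  destruct (def_seq_diagonal xs ss s N Hxs Hcv) as [n [HnN Hdiag]].
  destruct (c_conv s t Hs Ht _ ys Hdiag Hys q) as [L' [HL'in HL'out]].
  apply Un_cv_near with L' O; [|exact HL'out].
  intros k _. rewrite (UL_sequence _ _ _ (HL'in k) (proj1 (HL k) (n k))), Rdist_sym.
  apply HN, HnN.
Qed.

Lemma conv_continuous_l (t : coord Delta -> R) :
  inT d Delta t -> continuous_on_T d Delta (fun s => c s t).
Proof.
  intros Ht. apply continuous_on_T_of_seq. intros ss s Hss Hs Hcv.
  now apply conv_seq_continuous_l.
Qed.

Hypothesis d_pm : pseudometric d.
Hypothesis d_ti : translation_invariant d.
Hypothesis d_stable : stable d.
Hypothesis Delta_0 : Delta vzero.

Lemma conv_comm (s t : coord Delta -> R) :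
  inT d Delta s -> inT d Delta t -> forall p, c s t p = c t s p.
Proof.
  intros Hs Ht [lam [z Hz]].
  destruct (def_seq_exists s Hs) as [xs Hxs], (def_seq_exists t Ht) as [ys Hys].
  set (p := (lam, exist Delta z Hz)). set (r := Q2R (this lam)).
  destruct (c_conv s t Hs Ht xs ys Hxs Hys p) as [L [HLin HLout]].
  destruct (c_conv t s Ht Hs ys xs Hys Hxs p) as [L' [HL'in HL'out]].
  destruct (Un_cv_bounded_above _ _ (proj2 Hxs (lam, exist _ vzero Delta_0))) as [Mx HMx].
  destruct (Un_cv_bounded_above _ _ (proj2 Hys (lam, exist _ vzero Delta_0))) as [My HMy].
  destruct d_pm as [_ [d_sym _]].
  (* d(r (x_n + y_m), z) = d(r x_n, z - r y_m): the two iterated limits of the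
     right-hand side are c s t p and c t s p. *)
  refine (d_stable (fun n => vscal r (xs n)) (fun m => vsub z (vscal r (ys m)))
            _ _ L L' _ _ _ HLout _ HL'out).
  - now exists vzero, Mx.
  - exists z, My. intros m. rewrite dist_vsub_l by assumption. apply HMy.
  - intros n. eapply Un_cv_ext; [|apply (HLin n)]. intros m.
    unfold bar. simpl. now rewrite vscal_distr_v, dist_vadd_l.
  - intros m. eapply Un_cv_ext; [|apply (HL'in m)]. intros n.
    unfold bar. simpl. now rewrite vadd_comm, vscal_distr_v, dist_vadd_l.
Qed.

Lemma conv_continuous_r (s : coord Delta -> R) :
  inT d Delta s -> continuous_on_T d Delta (fun t => c s t).
Proof.
  intros Hs. apply continuous_on_T_ext with (fun t => c t s).
  - intros t Ht q. symmetry. now apply conv_comm.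
  - now apply conv_continuous_l.
Qed.

End Convolution.

Theorem lemma4p5 (B : Banach) (d : B -> B -> R) (Delta : B -> Prop)
  (HB_sep : separable B) (HB_inf : infinite_dimensional B)
  (Hd_pm : pseudometric d) (Hd_ti : translation_invariant d) (Hd_st : stable d)
  (Hd_ce : id_coarse_equivalence d) (HDelta : good_Delta Delta)
  (c : (coord Delta -> R) -> (coord Delta -> R) -> (coord Delta -> R))
  (Hc : is_convolution d Delta c) :
  (forall s t, inT d Delta s -> inT d Delta t -> inT d Delta (c s t)) /\
  (forall t, inT d Delta t -> continuous_on_T d Delta (fun s => c s t)) /\
  (forall s, inT d Delta s -> continuous_on_T d Delta (fun t => c s t)).
Proof.
  destruct HDelta as [Delta_enum [_ [Delta_0 [Delta_add _]]]].
  destruct (countable_prod _ _ countable_Qc (countable_sig B Delta vzero Delta_0 Delta_enum))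
    as [E E_surj].
  split; [|split].
  - intros s t. now apply (conv_inT B d Delta E E_surj c Hc).
  - intros t. now apply (conv_continuous_l B d Delta E E_surj c Hc).
  - intros s. now apply (conv_continuous_r B d Delta E E_surj c Hc Hd_pm Hd_ti Hd_st Delta_0).
Qed.
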